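(* Let $\Omega\subset\mathbb{R}^d$, $T_{\text{final}}>0$, and let $s=(s_1,\dots,s_{d_s})^\top$, $s_j:\Omega\times[0,T_{\text{final}})\to\mathcal{S}_j\subset\mathbb{R}$, be a (sufficiently smooth) solution of $\partial s/\partial t=f(s)$ with $f$ a differentiable nonlinear function (possibly involving spatial derivatives); $\mathcal{S}=\mathcal{S}_1\times\cdots\times\mathcal{S}_{d_s}$. Let $\mathcal{T}$ be a quadratic lifting and $\mathcal{T}^\dagger$ a reverse lifting map (context). Let $x_1,\dots,x_n$ be grid points, $\bar{\mathbf{s}}(t)$ with $\bar{\mathbf{s}}_{(j-1)n+l}(t)=s_j(x_l,t)$, $\bar{\mathbf{w}}(t)=\mathbf{T}(\bar{\mathbf{s}}(t))$. Suppose $\frac{d\mathbf{s}}{dt}=\mathbf{f}(\mathbf{s})$ ($\mathbf{f}$ Lipschitz) and $\frac{d\mathbf{w}}{dt}=\mathbf{A}\mathbf{w}+\mathbf{H}(\mathbf{w}\otimes\mathbf{w})$ ($\mathbf{A}\in\mathbb{R}^{nd_w\times nd_w}$, $\mathbf{H}\in\mathbb{R}^{nd_w\times n^2d_w^2}$) are consistent order-$p$ discretizations of $\partial s/\partial t=f(s)$ and $\partial w/\partial t=a(w)+h(w)$ respectively, and that $\mathbf{J}$ is Lipschitz. Let $t_1,\dots,t_K$ be times, $\bar{\mathbf{w}}_k=\bar{\mathbf{w}}(t_k)$, $\mathbf{W}=[\bar{\mathbf{w}}_1,\dots,\bar{\mathbf{w}}_K]\in\mathbb{R}^{nd_w\times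 K}$ with singular values $\sigma_1\ge\sigma_2\ge\cdots$, $\mathbf{U}_r\in\mathbb{R}^{nd_w\times r}$ its leading $r$ left singular vectors, $\mathbf{P}_r=\mathbf{U}_r\mathbf{U}_r^\top$, $\hat{\mathbf{W}}=\mathbf{U}_r^\top\mathbf{W}=[\hat{\mathbf{w}}_1,\dots,\hat{\mathbf{w}}_K]$, and $\hat{\mathbf{W}}'=[\hat{\mathbf{w}}_1',\dots,\hat{\mathbf{w}}_K']$ with $\hat{\mathbf{w}}_k'=\mathbf{U}_r^\top\mathbf{J}(\mathbf{T}^\dagger(\mathbf{P}_r\bar{\mathbf{w}}_k))\,\mathbf{f}(\mathbf{T}^\dagger(\mathbf{P}_r\bar{\mathbf{w}}_k))$. Then there exist constants $C_0,C_1,C_2\ge0$ such that $$\min_{\hat{\mathbf{A}}\in\mathbb{R}^{r\times r},\,\hat{\mathbf{H}}\in\mathbb{R}^{r\times r^2}}\frac1K\Big\|\hat{\mathbf{W}}^\top\hat{\mathbf{A}}^\top+(\hat{\mathbf{W}}\otimes\hat{\mathbf{W}})^\top\hat{\mathbf{H}}^\top-\hat{\mathbf{W}}'^\top\Big\|_F^2\le\big(C_0n^{\frac12-p}+(C_1+C_2)\varepsilon\big)^2,$$ where $\varepsilon^2=\sum_{i=r+1}^{nd_w}\sigma_i^2$.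
   Context: Quadratic lifting: a map $\mathcal{T}:\mathcal{S}\to\mathcal{W}\subset\mathbb{R}^{d_w}$, $d_w\ge d_s$, differentiable in $s$ with Jacobian $\mathcal{J}(s)$ satisfying $\sup_{s\in\mathcal{S}}\|\mathcal{J}(s)\|\le c$, such that $w=\mathcal{T}(s)$ satisfies $\partial w/\partial t=a(w)+h(w)$ with each component $a_j$ linear and $h_j$ quadratic (possibly involving spatial derivatives). Reverse lifting map: $\mathcal{T}^\dagger:\mathcal{W}\to\mathcal{S}$, differentiable with bounded derivative, with $\mathcal{T}^\dagger(\mathcal{T}(s))=s$ for all $s\in\mathcal{S}$. $\mathbf{T}:\mathbb{R}^{nd_s}\to\mathbb{R}^{nd_w}$ applies $\mathcal{T}$ node-wise (output index $(j-1)n+l$ is $\mathcal{T}_j$ of the state at $x_l$); $\mathbf{J}(\mathbf{s})\in\mathbb{R}^{nd_w\times nd_s}$ its Jacobian; $\mathbf{T}^\dagger$ applies $\mathcal{T}^\dagger$ node-wise (assumed well-defined at the projected states). Consistent order-$p$ discretization of the original PDE: there is $c_s>0$ independent of $n$ with $|\mathbf{f}_{(j-1)n+l}(\bar{\mathbf{s}}(t))-f_j(s(x,t))|_{x=x_l}|\le c_s n^{-p}$ for all $t,j,l$. Of the lifted PDE: there is $c_w>0$ independent of $n$ with $|\mathbf{A}_{(j-1)n+l,:}\bar{\mathbf{w}}+\mathbf{H}_{(j-1)n+l,:}(\bar{\mathbf{w}}\otimes\bar{\mathbf{w}})-(a_j(w)+h_j(w))|_{x=x_l}|\le c_w n^{-p}$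 for all $t$, $j=1,\dots,d_w$, $l=1,\dots,n$. Column-wise Kronecker product: for $\mathbf{b}\in\mathbb{R}^m$, $\mathbf{b}\otimes\mathbf{b}=(b_1^2,b_1b_2,\dots,b_1b_m,b_2b_1,\dots,b_m^2)^\top$, and for $\mathbf{B}=[\mathbf{b}_1,\dots,\mathbf{b}_K]$, $\mathbf{B}\otimes\mathbf{B}=[\mathbf{b}_1\otimes\mathbf{b}_1,\dots,\mathbf{b}_K\otimes\mathbf{b}_K]$. *)

From HB Require Import structures.
From mathcomp Require Import all_boot all_order all_algebra.
From mathcomp Require Import all_classical all_reals all_analysis.
Set Implicit Arguments. Unset Strict Implicit. Unset Printing Implicit Defensive.
Import Order.TTheory GRing.Theory Num.Theory.
Import numFieldNormedType.Exports.
Local Open Scope classical_set_scope.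
Local Open Scope ring_scope.

Section Defs.
Variable R : realType.

Definition vnorm m (v : 'cV[R]_m) : R := Num.sqrt (\sum_(i < m) v i 0 ^+ 2).

Definition frob2 m k (M : 'M[R]_(m, k)) : R := \sum_(i < m) \sum_(j < k) M i j ^+ 2.

(* b (x) b for a column vector b: entry of index mxvec_index i i' is b_i b_i' *)
Definition kron_vec m (b : 'cV[R]_m) : 'cV[R]_(m * m) := (mxvec (b *m b^T))^T.

Definition kron_col m k (B : 'M[R]_(m, k)) : 'M[R]_(m * m, k) :=
  \matrix_(q, j) kron_vec (col j B) q 0.

(* Discrete vectors in R^(m n) with entry (j-1)n+l (0-based: mxvec_index j l)
   equal to component j at grid node l. node v l is the state at node l. *)
Definition node m n (v : 'cV[R]_(m * n)) (l : 'I_n) : 'cV[R]_m :=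
  col l (vec_mx v^T).

Definition assemble m n (F : 'I_n -> 'cV[R]_m) : 'cV[R]_(m * n) :=
  (mxvec (\matrix_(j, l) F l j 0))^T.

Definition nodewise a b n (G : 'cV[R]_a -> 'cV[R]_b) (v : 'cV[R]_(a * n))
  : 'cV[R]_(b * n) := assemble (fun l => G (node v l)).

(* Jacobian of the node-wise map v |-> nodewise G v, where Jac is the Jacobian
   of G: block-diagonal in the nodes. *)
Definition nodewise_jac a b n (Jac : 'cV[R]_a -> 'M[R]_(b, a))
  (v : 'cV[R]_(a * n)) : 'M[R]_(b * n, a * n) :=
  \matrix_(q, q') \sum_(j < b) \sum_(i < a) \sum_(l < n)
     ((q == mxvec_index j l) && (q' == mxvec_index i l))%:R
       * Jac (node v l) j i.

Definition inS m (S : 'I_m -> set R) (v : 'cV[R]_m) : Prop :=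
  forall j, S j (v j 0).

(* linear and quadratic operators on fields X -> R^m (possibly involving
   spatial derivatives: no structure beyond (bi)linearity is imposed) *)
Definition lin_op (X : Type) m (L : (X -> 'cV[R]_m) -> X -> R) : Prop :=
  forall (al : R) u v,
    L (fun y => al *: u y + v y) = (fun y => al * L u y + L v y).

Definition quad_op (X : Type) m (Q : (X -> 'cV[R]_m) -> X -> R) : Prop :=
  exists B : (X -> 'cV[R]_m) -> (X -> 'cV[R]_m) -> X -> R,
    (forall v, lin_op (fun u => B u v)) /\ (forall u, lin_op (fun v => B u v)) /\
    (forall u, Q u = B u u).

Definition is_svd N K (W : 'M[R]_(N, K)) (U : 'M[R]_N) (sg : nat -> R) (V : 'M[R]_K) : Prop :=
  U^T *m U = 1%:M /\ V^T *m V = 1%:M /\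
  (forall i, 0 <= sg i) /\ (forall i j, (i <= j)%N -> sg j <= sg i) /\
  (forall i, (K <= i)%N -> sg i = 0) /\
  W = U *m (\matrix_(i, k) if (i : nat) == (k : nat) then sg i else 0) *m V^T.

Definition lead_cols N r (hr : (r <= N)%N) (U : 'M[R]_N) : 'M[R]_(N, r) :=
  \matrix_(q, j) U q (widen_ord hr j).

End Defs.

(* Take Ah := Ur^T A Ur and Hh := Ur^T H (Ur (x) Ur).  Then the k-th column of
   the operator inference residual is Ur^T rho(Pr w_k), where
   rho(w) := A w + H (w (x) w) - J(T^dagger w) f(T^dagger w).
   At an exact snapshot T^dagger w_k is the discrete state at time t_k, and by
   the chain rule the lifted right-hand side a + h equals J f there, so the two
   consistency assumptions bound every entry of rho(w_k) by O(n^-p), hence its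
   Euclidean norm by O(n^(1/2-p)).  Moreover rho is Lipschitz near the snapshots
   (T^dagger by the mean value theorem, J and f by assumption, the quadratic term
   locally), so rho(Pr w_k) is within O(|w_k - Pr w_k|) of rho(w_k), while
   sum_k |w_k - Pr w_k|^2 is the sum eps^2 of the squared discarded singular
   values.  Averaging the squared column norms gives the bound, with C2 = 0. *)

From HB Require Import structures.
From mathcomp Require Import all_boot all_order all_algebra.
From mathcomp Require Import all_classical all_reals all_analysis.
From mathcomp Require Import ring lra.
Import Order.TTheory GRing.Theory Num.Theory.
Import numFieldNormedType.Exports.
Local Open Scope classical_set_scope.
Local Open Scope ring_scope.

Section Scalars.
Local Set Implicit Arguments.
Local Unset Strict Implicit.
Variable R : realType.

Lemma mean_sqr_le K (x d : 'I_K -> R) a b eps :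
  (0 < K)%N -> 0 <= a -> 0 <= b -> 0 <= eps ->
  (forall k, x k <= 2 * a ^+ 2 + 2 * (b * d k) ^+ 2) -> \sum_k d k ^+ 2 = eps ^+ 2 ->
  K%:R^-1 * \sum_k x k <= (2 * a + 2 * b * eps) ^+ 2.
Proof.
move=> K0 a0 b0 eps0 xle deps.
apply: (@le_trans _ _ (K%:R^-1 * \sum_k (2 * a ^+ 2 + 2 * b ^+ 2 * d k ^+ 2))).
  rewrite ler_wpM2l ?invr_ge0 ?ler0n //; apply: ler_sum => k _.
  by rewrite (le_trans (xle k)) // exprMn !mulrA lexx.
rewrite big_split /= sumr_const card_ord -mulr_sumr deps.
have -> : K%:R^-1 * (2 * a ^+ 2 *+ K + 2 * b ^+ 2 * eps ^+ 2) =
    2 * a ^+ 2 + K%:R^-1 * (2 * b ^+ 2 * eps ^+ 2).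
  by rewrite -[_ *+ K]mulr_natr; field; rewrite pnatr_eq0 -lt0n.
have : K%:R^-1 * (2 * b ^+ 2 * eps ^+ 2) <= 2 * b ^+ 2 * eps ^+ 2.
  by rewrite ler_piMl ?mulr_ge0 ?sqr_ge0 // invf_le1 ?ler1n ?ltr0n.
have := mulr_ge0 (mulr_ge0 a0 b0) eps0; nra.
Qed.

Lemma sqrt_mul_powR (m n : nat) (p : R) : (0 < n)%N ->
  Num.sqrt (m * n)%:R * n%:R `^ (- p) = Num.sqrt m%:R * n%:R `^ (2^-1 - p).
Proof.
move=> n0; rewrite natrM sqrtrM ?ler0n // -mulrA powRD ?powR12_sqrt ?ler0n //.
by rewrite pnatr_eq0 -lt0n n0 implybT.
Qed.

End Scalars.

Section Norms.
Local Set Implicit Arguments.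
Local Unset Strict Implicit.
Variable R : realType.

(* [`|M|] is the max-entry norm of matrices; [vnorm] is the Euclidean norm. *)
Lemma mxnorm_entry m k (M : 'M[R]_(m, k)) i j : `|M i j| <= `|M|.
Proof.
rewrite [leRHS]/Num.Def.normr/= mx_normrE; apply/bigmax_geP; right => /=.
by exists (i, j).
Qed.

Lemma mxnorm_le m k (M : 'M[R]_(m, k)) E :
  0 <= E -> (forall i j, `|M i j| <= E) -> `|M| <= E.
Proof.
move=> E0 ME; rewrite [leLHS]/Num.Def.normr/= mx_normrE.
by apply: bigmax_le => // -[i j] _; apply: ME.
Qed.

Lemma mxnorm_mulmx m k l (M : 'M[R]_(m, k)) (Z : 'M[R]_(k, l)) :
  `|M *m Z| <= k%:R * `|M| * `|Z|.
Proof.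
apply: mxnorm_le => [|i j]; first by rewrite !mulr_ge0.
rewrite mxE; apply: (le_trans (ler_norm_sum _ _ _)).
apply: (@le_trans _ _ (\sum_(q < k) `|M| * `|Z|)).
  by apply: ler_sum => q _; rewrite normrM ler_pM ?mxnorm_entry.
by rewrite sumr_const card_ord -[X in X <= _]mulr_natl mulrA.
Qed.

Lemma vnorm_ge0 m (v : 'cV[R]_m) : 0 <= vnorm v.
Proof. exact: sqrtr_ge0. Qed.

Lemma vnorm_sqr m (v : 'cV[R]_m) : vnorm v ^+ 2 = \sum_i v i 0 ^+ 2.
Proof. by rewrite sqr_sqrtr // sumr_ge0 // => i _; rewrite sqr_ge0. Qed.

Lemma vnorm_entry m (v : 'cV[R]_m) i : `|v i 0| <= vnorm v.
Proof.
rewrite -sqrtr_sqr ler_sqrt ?sumr_ge0 // => [|j _]; last by rewrite sqr_ge0.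
by rewrite (bigD1 i) //= lerDl sumr_ge0 // => j _; rewrite sqr_ge0.
Qed.

Lemma mxnorm_le_vnorm m (v : 'cV[R]_m) : `|v| <= vnorm v.
Proof.
apply: mxnorm_le => [|i j]; first exact: vnorm_ge0.
by rewrite (ord1 j); exact: vnorm_entry.
Qed.

Lemma vnorm_le_entries m (v : 'cV[R]_m) E :
  (forall i, `|v i 0| <= E) -> vnorm v <= Num.sqrt m%:R * E.
Proof.
case: m v => [v _|m v vE]; first by rewrite /vnorm big_ord0 sqrtr0 mul0r.
have E0 : 0 <= E by apply: le_trans (vE ord0).
rewrite /vnorm -(ger0_norm E0) -sqrtr_sqr -sqrtrM ?ler0n //.
rewrite ler_sqrt; last by rewrite mulr_ge0 ?ler0n ?sqr_ge0.
apply: (@le_trans _ _ (\sum_(i < m.+1) E ^+ 2)).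
  by apply: ler_sum => i _; rewrite -real_normK ?num_real // lerXn2r ?nnegrE.
by rewrite sumr_const card_ord mulr_natl.
Qed.

Lemma vnorm_le_mxnorm m (v : 'cV[R]_m) : vnorm v <= Num.sqrt m%:R * `|v|.
Proof. by apply: vnorm_le_entries => i; exact: mxnorm_entry. Qed.

Lemma mxnorm_le_of_vnorm m k (x : 'cV[R]_k) (y : 'cV[R]_m) L :
  vnorm x <= L * vnorm y -> `|x| <= `|L| * Num.sqrt m%:R * `|y|.
Proof.
move=> xy; apply: (le_trans (mxnorm_le_vnorm x)); apply: (le_trans xy).
apply: (@le_trans _ _ (`|L| * vnorm y)); first by rewrite ler_wpM2r ?vnorm_ge0 ?ler_norm.
by rewrite -mulrA ler_wpM2l ?vnorm_le_mxnorm.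
Qed.

Lemma vnorm_addr_sqr m (u v : 'cV[R]_m) :
  vnorm (u + v) ^+ 2 <= 2 * vnorm u ^+ 2 + 2 * vnorm v ^+ 2.
Proof.
rewrite !vnorm_sqr !mulr_sumr -big_split /=; apply: ler_sum => i _.
rewrite mxE; have := sqr_ge0 (u i 0 - v i 0); rewrite sqrrB sqrrD; lra.
Qed.

Lemma mxnorm_le_of_vnorm2 m m' k (x : 'cV[R]_k) (y : 'cV[R]_m) (z : 'cV[R]_m') L :
  vnorm x <= L * vnorm y * vnorm z ->
  `|x| <= `|L| * Num.sqrt m%:R * Num.sqrt m'%:R * `|y| * `|z|.
Proof.
move=> /mxnorm_le_of_vnorm xyz; apply: le_trans xyz _.
rewrite normrM (ger0_norm (vnorm_ge0 y)) -!mulrA ler_wpM2l // mulrCA [leRHS]mulrCA.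
rewrite ler_wpM2l ?sqrtr_ge0 // mulrA ler_wpM2r //.
exact: vnorm_le_mxnorm.
Qed.

Lemma mxnorm_mulmx_sub m k (Ju Jw : 'M[R]_(m, k)) (fu fw : 'cV[R]_k) :
  `|Ju *m fu - Jw *m fw| <= `|(Ju - Jw) *m fu| + k%:R * `|Jw| * `|fu - fw|.
Proof.
have -> : Ju *m fu - Jw *m fw = (Ju - Jw) *m fu + Jw *m (fu - fw).
  by rewrite mulmxBl mulmxBr addrA subrK.
by apply: le_trans (ler_normD _ _) _; rewrite lerD2l mxnorm_mulmx.
Qed.

Lemma vnorm_sqr_le_split m (x y : 'cV[R]_m) e d :
  (forall i, `|x i 0| <= e) -> `|y - x| <= d ->
  vnorm y ^+ 2 <= 2 * (Num.sqrt m%:R * e) ^+ 2 + 2 * (Num.sqrt m%:R * d) ^+ 2.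
Proof.
move=> xe yxd; rewrite -(subrK x y) addrC.
apply: le_trans (vnorm_addr_sqr _ _) _.
have xle := vnorm_le_entries xe.
have yxle : vnorm (y - x) <= Num.sqrt m%:R * d.
  by apply: le_trans (vnorm_le_mxnorm _) _; rewrite ler_wpM2l ?sqrtr_ge0.
rewrite lerD // ler_wpM2l // lerXn2r ?nnegrE ?vnorm_ge0 //.
- exact: le_trans (vnorm_ge0 _) xle.
- exact: le_trans (vnorm_ge0 _) yxle.
Qed.

Lemma frob2_ge0 m k (M : 'M[R]_(m, k)) : 0 <= frob2 M.
Proof. by apply: sumr_ge0 => i _; apply: sumr_ge0 => j _; rewrite sqr_ge0. Qed.

Lemma frob2_trmx m k (M : 'M[R]_(m, k)) : frob2 M^T = frob2 M.
Proof.
rewrite /frob2 exchange_big; apply: eq_bigr => i _.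
by apply: eq_bigr => j _; rewrite mxE.
Qed.

Lemma frob2_cols m k (M : 'M[R]_(m, k)) : frob2 M = \sum_j vnorm (col j M) ^+ 2.
Proof.
rewrite -frob2_trmx; apply: eq_bigr => j _.
by rewrite vnorm_sqr; apply: eq_bigr => i _; rewrite !mxE.
Qed.

Lemma frob2_vnorm m (v : 'cV[R]_m) : frob2 v = vnorm v ^+ 2.
Proof. by rewrite frob2_cols big_ord1 col_id. Qed.

Lemma frob2_tr m k (M : 'M[R]_(m, k)) : frob2 M = \tr (M *m M^T).
Proof.
apply: eq_bigr => i _; rewrite mxE.
by apply: eq_bigr => j _; rewrite mxE expr2.
Qed.

Lemma frob2_orthogonal_mull m k (U : 'M[R]_m) (M : 'M[R]_(m, k)) :
  U^T *m U = 1%:M -> frob2 (U *m M) = frob2 M.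
Proof.
by move=> UU; rewrite !frob2_tr trmx_mul -mulmxA mxtrace_mulC -!mulmxA UU mulmx1.
Qed.

Lemma frob2_orthogonal_mulr m k (V : 'M[R]_k) (M : 'M[R]_(m, k)) :
  V^T *m V = 1%:M -> frob2 (M *m V^T) = frob2 M.
Proof.
by move=> VV; rewrite !frob2_tr trmx_mul trmxK -mulmxA (mulmxA V^T) VV mul1mx.
Qed.

Lemma vnorm_orthogonal_mull m (U : 'M[R]_m) (x : 'cV[R]_m) :
  U^T *m U = 1%:M -> vnorm (U^T *m x) = vnorm x.
Proof.
move=> /mulmx1C UU; apply/eqP; rewrite -(eqrXn2 (n:=2)) ?vnorm_ge0 //.
by rewrite -!frob2_vnorm frob2_orthogonal_mull ?trmxK.
Qed.

End Norms.

Section SVD.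
Local Set Implicit Arguments.
Local Unset Strict Implicit.
Variable R : realType.

Lemma lead_colsE N r (hr : (r <= N)%N) (U : 'M[R]_N) :
  lead_cols hr U = U *m pid_mx r.
Proof.
apply/matrixP => q j; rewrite !mxE (bigD1 (widen_ord hr j)) //= big1 ?addr0.
  by rewrite mxE /= eqxx ltn_ord mulr1.
by move=> i; rewrite -val_eqE /= => /negbTE ij; rewrite mxE ij mulr0.
Qed.

Lemma vnorm_lead_cols N r (hr : (r <= N)%N) (U : 'M[R]_N) (x : 'cV[R]_N) :
  U^T *m U = 1%:M -> vnorm ((lead_cols hr U)^T *m x) <= vnorm x.
Proof.
move=> UU; rewrite -(vnorm_orthogonal_mull x UU) lead_colsE trmx_mul tr_pid_mx -mulmxA.
set y := U^T *m x.
have pidE i : (pid_mx r *m y) i 0 = y (widen_ord hr i) 0.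
  rewrite mxE (bigD1 (widen_ord hr i)) //= big1 ?addr0.
    by rewrite mxE /= eqxx ltn_ord mul1r.
  by move=> j; rewrite -val_eqE /= eq_sym => /negbTE ij; rewrite mxE ij mul0r.
rewrite -(ler_pXn2r (n:=2)) ?nnegrE ?vnorm_ge0 // !vnorm_sqr.
rewrite [leRHS](bigID (fun i : 'I_N => (i < r)%N)) /= (big_ord_narrow hr).
rewrite -[leLHS]addr0 lerD ?sumr_ge0 // => [|i _]; last by rewrite sqr_ge0.
by under eq_bigr do rewrite pidE.
Qed.

Lemma sum_sqr_diag_row (x : R) (i K : nat) :
  \sum_(k < K) (if i == k then x else 0) ^+ 2 = if (i < K)%N then x ^+ 2 else 0.
Proof.
case: ltnP => iK.
  rewrite (bigD1 (Ordinal iK)) //= eqxx big1 ?addr0 // => k.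
  by rewrite -val_eqE /= eq_sym => /negbTE ->; rewrite expr0n.
by apply: big1 => k _; rewrite gtn_eqF ?(leq_trans (ltn_ord k) iK) // expr0n.
Qed.

Lemma frob2_sub_lead_proj N K (W : 'M[R]_(N, K)) U sg V r (hr : (r <= N)%N) :
  is_svd W U sg V ->
  frob2 (W - lead_cols hr U *m (lead_cols hr U)^T *m W) =
  \sum_(i < N | (r <= i)%N) sg i ^+ 2.
Proof.
move=> [UU [VV [_ [_ [sgK ->]]]]]; set D := \matrix_(i, k) _.
have -> : lead_cols hr U *m (lead_cols hr U)^T = U *m pid_mx r *m U^T.
  by rewrite lead_colsE trmx_mul tr_pid_mx !mulmxA -(mulmxA U) pid_mx_id.
have -> : U *m D *m V^T - U *m pid_mx r *m U^T *m (U *m D *m V^T) =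
    U *m (copid_mx r *m D) *m V^T.
  rewrite -!mulmxA (mulmxA U^T) UU mul1mx.
  by rewrite /copid_mx mulmxBl mul1mx mulmxBr.
rewrite frob2_orthogonal_mulr // frob2_orthogonal_mull // /frob2 [RHS]big_mkcond /=.
apply: eq_bigr => i _.
have copidD k : (copid_mx r *m D) i k = (r <= i)%:R * D i k.
  rewrite mxE (bigD1 i) //= big1 ?addr0 => [|j ji]; last first.
    have ij : (i == j) = false by rewrite eq_sym (negbTE ji).
    by rewrite !mxE ij val_eqE ij subrr mul0r.
  by rewrite !mxE !eqxx /=; case: leqP; rewrite /= ?mulr0n ?mulr1n ?subrr ?subr0.
under eq_bigr do rewrite copidD.
case: leqP => ri; last by apply: big1 => k _; rewrite mul0r expr0n.
under eq_bigr do rewrite mul1r mxE.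
by rewrite sum_sqr_diag_row; case: ltnP => // /sgK ->; rewrite expr0n.
Qed.

Lemma frob2_svd N K (W : 'M[R]_(N, K)) U sg V :
  is_svd W U sg V -> frob2 W = \sum_(i < N) sg i ^+ 2.
Proof.
by move=> /(frob2_sub_lead_proj (leq0n N)); rewrite thinmx0 !mul0mx subr0.
Qed.

Lemma sum_vnorm_sub_lead_proj N K (W : 'M[R]_(N, K)) U sg V r (hr : (r <= N)%N) :
  is_svd W U sg V ->
  \sum_k vnorm (col k W - lead_cols hr U *m (lead_cols hr U)^T *m col k W) ^+ 2 =
  \sum_(i < N | (r <= i)%N) sg i ^+ 2.
Proof.
move=> svd; rewrite -(frob2_sub_lead_proj hr svd) frob2_cols.
by apply: eq_bigr => k _; rewrite linearB /= !colE !mulmxA.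
Qed.

Lemma vnorm_sub_lead_proj_le N K (W : 'M[R]_(N, K)) U sg V r (hr : (r <= N)%N) k :
  is_svd W U sg V ->
  vnorm (col k W - lead_cols hr U *m (lead_cols hr U)^T *m col k W)
    <= Num.sqrt (frob2 W).
Proof.
move=> svd; set Pr := lead_cols hr U *m _.
rewrite -(ler_pXn2r (n:=2)) ?nnegrE ?vnorm_ge0 ?sqrtr_ge0 //.
rewrite [leRHS]sqr_sqrtr ?frob2_ge0 // (frob2_svd svd).
apply: le_trans (_ : _ <= \sum_k vnorm (col k W - Pr *m col k W) ^+ 2) _.
  by rewrite (bigD1 k) //= lerDl sumr_ge0 // => ? _; rewrite sqr_ge0.
rewrite (sum_vnorm_sub_lead_proj hr svd) [leRHS](bigID (fun i : 'I_N => (r <= i)%N)) /=.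
by rewrite lerDl sumr_ge0 // => ? _; rewrite sqr_ge0.
Qed.

End SVD.

Section Kronecker.
Local Set Implicit Arguments.
Local Unset Strict Implicit.
Variable R : realType.

Definition kron_mx m k (M : 'M[R]_(m, k)) : 'M[R]_(m * m, k * k) :=
  (lin_mx (mulmxr M^T \o mulmx M))^T.

Lemma kron_vec_mulmx m k (M : 'M[R]_(m, k)) b :
  kron_vec (M *m b) = kron_mx M *m kron_vec b.
Proof. by rewrite /kron_vec -trmx_mul mul_vec_lin /= trmx_mul !mulmxA. Qed.

Lemma col_kron_col m k (B : 'M[R]_(m, k)) j : col j (kron_col B) = kron_vec (col j B).
Proof. by apply/matrixP => q i; rewrite (ord1 i) !mxE. Qed.

Lemma kron_vec_lipschitz m (u v : 'cV[R]_m) :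
  `|kron_vec u - kron_vec v| <= (`|u| + `|v|) * `|u - v|.
Proof.
apply: mxnorm_le => [|q j]; first by rewrite mulr_ge0 ?addr_ge0.
rewrite (ord1 j); case/mxvec_indexP: q => i i'.
rewrite !mxE !mxvecE !mxE !big_ord1 !mxE.
have -> : u i 0 * u i' 0 - v i 0 * v i' 0 =
    (u i 0 - v i 0) * u i' 0 + v i 0 * (u i' 0 - v i' 0) by ring.
have uv k : `|u k 0 - v k 0| <= `|u - v|.
  by have := mxnorm_entry (u - v) k 0; rewrite !mxE.
apply: (le_trans (ler_normD _ _)); rewrite !normrM mulrDl.
by apply: lerD; [rewrite mulrC|]; apply: ler_pM; rewrite ?uv ?mxnorm_entry.
Qed.

End Kronecker.

Section Nodes.
Local Set Implicit Arguments.
Local Unset Strict Implicit.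
Variable R : realType.

Lemma nodeE m n (v : 'cV[R]_(m * n)) l i j : node v l i j = v (mxvec_index i l) 0.
Proof. by rewrite /node !mxE. Qed.

Lemma assembleE m n (F : 'I_n -> 'cV[R]_m) j l k :
  assemble F (mxvec_index j l) k = F l j 0.
Proof. by rewrite /assemble (ord1 k) mxE mxvecE mxE. Qed.

Lemma node_assemble m n (F : 'I_n -> 'cV[R]_m) l : node (assemble F) l = F l.
Proof. by apply/matrixP => i j; rewrite nodeE assembleE (ord1 j). Qed.

Lemma nodewiseE a b n (G : 'cV[R]_a -> 'cV[R]_b) (v : 'cV[R]_(a * n)) j l k :
  nodewise G v (mxvec_index j l) k = G (node v l) j 0.
Proof. by rewrite /nodewise assembleE. Qed.

Lemma nodeB m n (u v : 'cV[R]_(m * n)) l : node (u - v) l = node u l - node v l.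
Proof. by apply/matrixP => i j; rewrite !nodeE !mxE. Qed.

Lemma mxnorm_node m n (v : 'cV[R]_(m * n)) l : `|node v l| <= `|v|.
Proof. by apply: mxnorm_le => // i j; rewrite nodeE; exact: mxnorm_entry. Qed.

Lemma nodewiseK a b n (G : 'cV[R]_a -> 'cV[R]_b) (G' : 'cV[R]_b -> 'cV[R]_a)
    (v : 'cV[R]_(a * n)) :
  (forall l, G' (G (node v l)) = node v l) -> nodewise G' (nodewise G v) = v.
Proof.
move=> GK; apply/matrixP => q j; rewrite (ord1 j); case/mxvec_indexP: q => i l.
by rewrite nodewiseE /nodewise node_assemble GK nodeE.
Qed.

Lemma eq_mxvec_index m n (i i' : 'I_m) (l l' : 'I_n) :
  (mxvec_index i l == mxvec_index i' l') = (i == i') && (l == l').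
Proof.
apply/eqP/andP => [|[/eqP -> /eqP ->] //].
by move/cast_ord_inj/enum_rank_inj => [-> ->].
Qed.

Lemma nodewise_jac_mulE a b n (Jac : 'cV[R]_a -> 'M[R]_(b, a))
    (v z : 'cV[R]_(a * n)) j l :
  (nodewise_jac Jac v *m z) (mxvec_index j l) 0 = (Jac (node v l) *m node z l) j 0.
Proof.
have rowE q : nodewise_jac Jac v (mxvec_index j l) q =
    \sum_i (q == mxvec_index i l)%:R * Jac (node v l) j i.
  rewrite mxE (bigD1 j) //= [X in _ + X]big1 ?addr0 => [|j' /negbTE j'j]; last first.
    by apply: big1 => i _; apply: big1 => l' _; rewrite eq_mxvec_index eq_sym j'j mul0r.
  apply: eq_bigr => i _; rewrite (bigD1 l) //= [X in _ + X]big1 ?addr0.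
    by rewrite eq_mxvec_index !eqxx.
  by move=> l' /negbTE l'l; rewrite eq_mxvec_index eq_sym l'l andbF mul0r.
rewrite !mxE; under eq_bigr do rewrite rowE big_distrl /=.
rewrite exchange_big /=; apply: eq_bigr => i _.
rewrite (bigD1 (mxvec_index i l)) //= [X in _ + X]big1 ?addr0.
  by rewrite eqxx mul1r nodeE.
by move=> q /negbTE ->; rewrite !mul0r.
Qed.

End Nodes.

Section Calculus.
Local Set Implicit Arguments.
Local Unset Strict Implicit.
Variable R : realType.

Lemma is_derive_mx_entry m k (g : R -> 'M[R]_(m, k)) t i j :
  differentiable g t -> is_derive t 1 (fun tau => g tau i j) ('d g t 1 i j).
Proof.
move=> dg; have dg1 : derivable g t 1 by exact: diff_derivable.
have dgij : derivable (fun tau => g tau i j) t 1 by move/derivable_mxP : dg1; apply.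
by apply: DeriveDef => //; rewrite -deriveE // derive_mx // mxE.
Qed.

Lemma derive1_comp_entry a b (sig : R -> 'cV[R]_a) (G : 'cV[R]_a -> 'cV[R]_b)
    (Jm : 'M[R]_(b, a)) (dsig : 'I_a -> R) (t : R) (j : 'I_b) :
  (forall i, is_derive t 1 (fun tau => sig tau i 0) (dsig i)) ->
  differentiable G (sig t) -> (forall u, 'd G (sig t) u = Jm *m u) ->
  'D_1 (fun tau => G (sig tau) j 0) t = (Jm *m \col_i dsig i) j 0.
Proof.
move=> Dsig dG dGE.
have sig1 : derivable sig t 1.
  by apply/derivable_mxP => i j'; rewrite (ord1 j'); case: (Dsig i).
have Dsig1 : 'D_1 sig t = \col_i dsig i.
  rewrite derive_mx //; apply/matrixP => i j'; rewrite !mxE (ord1 j').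
  by case: (Dsig i).
have dsig1 : differentiable sig t by apply/derivable1_diffP.
have dGsig : differentiable (G \o sig) t by apply: differentiable_comp.
rewrite (@derive_val _ _ _ _ _ _ _ (is_derive_mx_entry j 0 dGsig)) /=.
by rewrite diff_comp //= dGE -(deriveE _ dsig1) Dsig1.
Qed.

Lemma entry_lipschitz_of_diff_bound a b (G : 'cV[R]_a -> 'cV[R]_b) c x y i :
  (forall u, differentiable G u) -> (forall u v, vnorm ('d G u v) <= c * vnorm v) ->
  `|G x i 0 - G y i 0| <= `|c| * vnorm (x - y).
Proof.
move=> dG dGc.
pose line : R -> 'cV[R]_a := ( *:%R^~ (x - y)) + cst y.
have dline tau : is_diff tau line ( *:%R^~ (x - y) + 0) by apply: is_diffD.
have dGline tau : differentiable (G \o line) tau by apply: differentiable_comp.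
have dGlineE tau : 'd (G \o line) tau 1 = 'd G (line tau) (x - y).
  have dlineE : 'd line tau = ( *:%R^~ (x - y) + 0) :> (R -> _) by apply: diff_val.
  rewrite diff_comp //= dlineE; congr ('d G (line tau) _).
  by rewrite /GRing.add /= /cst addr0 scale1r.
pose phi tau := (G \o line) tau i 0.
have Dphi (tau : R) : is_derive tau 1 phi ('d (G \o line) tau 1 i 0).
  exact: is_derive_mx_entry.
have phi_cont : {within `[0, 1], continuous phi}.
  apply: continuous_subspaceT => tau; apply: differentiable_continuous.
  by apply/derivable1_diffP; case: (Dphi tau).
have [xi _ phiE] := MVT_segment ler01 (fun tau _ => Dphi tau) phi_cont.
have -> : G x i 0 - G y i 0 = phi 1 - phi 0.
  by rewrite /phi /line /= /GRing.add /= /cst scale1r scale0r add0r subrK.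
rewrite phiE subr0 mulr1 dGlineE; apply: le_trans (vnorm_entry _ i) _.
by apply: le_trans (dGc _ _) _; rewrite ler_wpM2r ?vnorm_ge0 ?ler_norm.
Qed.

Lemma nodewise_lipschitz a b n (G : 'cV[R]_a -> 'cV[R]_b) c (u v : 'cV[R]_(a * n)) :
  (forall u, differentiable G u) -> (forall u v, vnorm ('d G u v) <= c * vnorm v) ->
  `|nodewise G u - nodewise G v| <= `|c| * Num.sqrt a%:R * `|u - v|.
Proof.
move=> dG dGc; apply: mxnorm_le => [|q j]; first by rewrite !mulr_ge0 ?sqrtr_ge0.
rewrite (ord1 j); case/mxvec_indexP: q => i l; rewrite mxE [X in _ + X]mxE !nodewiseE.
apply: le_trans (entry_lipschitz_of_diff_bound (node u l) (node v l) i dG dGc) _.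
rewrite -mulrA ler_wpM2l // -nodeB; apply: le_trans (vnorm_le_mxnorm _) _.
by rewrite ler_wpM2l ?sqrtr_ge0 ?mxnorm_node.
Qed.

End Calculus.

Section LiftedResidual.
Local Set Implicit Arguments.
Local Unset Strict Implicit.
Variables (R : realType) (ds dw n : nat).
Variables (Jl : 'cV[R]_ds -> 'M[R]_(dw, ds)) (Td : 'cV[R]_dw -> 'cV[R]_ds).
Variables (fb : 'cV[R]_(ds * n) -> 'cV[R]_(ds * n)) (A : 'M[R]_(dw * n)).
Variable H : 'M[R]_(dw * n, (dw * n) * (dw * n)).

Local Notation N := (dw * n)%N.
Local Notation J := (nodewise_jac (n:=n) Jl).
Local Notation Tdn := (nodewise (n:=n) Td).

Definition lifted_residual (w : 'cV[R]_N) : 'cV[R]_N :=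
  A *m w + H *m kron_vec w - J (Tdn w) *m fb (Tdn w).

Lemma lifted_residual_consistent (Tl : 'cV[R]_ds -> 'cV[R]_dw) (v : 'cV[R]_(ds * n))
    (fe : 'I_n -> 'cV[R]_ds) c e1 e2 :
  nodewise Td (nodewise Tl v) = v ->
  (forall l u, vnorm (Jl (node v l) *m u) <= c * vnorm u) ->
  (forall j l, `|(A *m nodewise Tl v + H *m kron_vec (nodewise Tl v))
                   (mxvec_index j l) 0 - (Jl (node v l) *m fe l) j 0| <= e1) ->
  (forall i l, `|fb v (mxvec_index i l) 0 - fe l i 0| <= e2) ->
  forall q, `|lifted_residual (nodewise Tl v) q 0| <= e1 + `|c| * Num.sqrt ds%:R * e2.
Proof.
move=> TdK Jc rhs_e1 fb_e2 q; case/mxvec_indexP: q => j l.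
rewrite /lifted_residual TdK mxE [X in _ + X]mxE nodewise_jac_mulE.
set g := (_ *m _ + _ *m _) _ _.
have -> : g - (Jl (node v l) *m node (fb v) l) j 0 =
    (g - (Jl (node v l) *m fe l) j 0)
    + (Jl (node v l) *m (fe l - node (fb v) l)) j 0.
  by rewrite mulmxBr; move: (_ *m fe l) (_ *m node _ _) => a b; rewrite !mxE; ring.
apply: le_trans (ler_normD _ _) _; apply: lerD; first exact: rhs_e1.
rewrite -mulrA; apply: le_trans (vnorm_entry _ j) _; apply: le_trans (Jc _ _) _.
apply: le_trans (ler_wpM2r (vnorm_ge0 _) (ler_norm c)) _.
rewrite ler_wpM2l //; apply: vnorm_le_entries => i.
by rewrite mxE [X in _ + X]mxE nodeE distrC fb_e2.
Qed.

Lemma lifted_residual_col r K (Ur : 'M[R]_(N, r)) (W : 'M[R]_(N, K)) k :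
  col k (Ur^T *m A *m Ur *m (Ur^T *m W)
         + Ur^T *m H *m kron_mx Ur *m kron_col (Ur^T *m W)
    - \matrix_(i, k) (Ur^T *m (J (Tdn (Ur *m Ur^T *m col k W))
                          *m fb (Tdn (Ur *m Ur^T *m col k W)))) i 0)
  = Ur^T *m lifted_residual (Ur *m Ur^T *m col k W).
Proof.
have colM p q (X : 'M[R]_(p, q)) (Y : 'M[R]_(q, K)) : col k (X *m Y) = X *m col k Y.
  by rewrite !colE mulmxA.
rewrite linearB linearD /= !colM col_kron_col colM.
have -> : col k (\matrix_(i, k) (Ur^T *m (J (Tdn (Ur *m Ur^T *m col k W))
      *m fb (Tdn (Ur *m Ur^T *m col k W)))) i 0) =
    Ur^T *m (J (Tdn (Ur *m Ur^T *m col k W)) *m fb (Tdn (Ur *m Ur^T *m col k W))).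
  by apply/matrixP => i j; rewrite (ord1 j) !mxE.
by rewrite /lifted_residual -!mulmxA -kron_vec_mulmx mulmxBr mulmxDr.
Qed.

Variables (cd Lf LJ : R).
Hypothesis Td_diff : forall u, differentiable Td u.
Hypothesis Td_diff_bound : forall u v, vnorm ('d Td u v) <= cd * vnorm v.
Hypothesis fb_lip : forall u v, vnorm (fb u - fb v) <= Lf * vnorm (u - v).
Hypothesis J_lip : forall u v (z : 'cV[R]_(ds * n)),
  vnorm ((J u - J v) *m z) <= LJ * vnorm (u - v) * vnorm z.

(* Lipschitz constants of [Tdn], [fb] and [J] for the max-entry norm. *)
Local Notation Lt := (`|cd| * Num.sqrt dw%:R).
Local Notation Lf' := (`|Lf| * Num.sqrt (ds * n)%:R).
Local Notation LJ' := (`|LJ| * Num.sqrt (ds * n)%:R * Num.sqrt (ds * n)%:R).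

Definition residual_lip (Mw D MJ F0 : R) : R :=
  N%:R * `|A| + (N * N)%:R * `|H| * (2 * Mw + D)
  + (LJ' * (F0 + Lf' * (Lt * D)) + (ds * n)%:R * MJ * Lf') * Lt.

Lemma residual_lip_ge0 Mw D MJ F0 :
  0 <= Mw -> 0 <= D -> 0 <= MJ -> 0 <= F0 -> 0 <= residual_lip Mw D MJ F0.
Proof. by move=> *; rewrite /residual_lip !(addr_ge0, mulr_ge0) ?sqrtr_ge0. Qed.

Lemma lifted_residual_lipschitz Mw D MJ F0 u w :
  `|w| <= Mw -> `|u - w| <= D -> `|J (Tdn w)| <= MJ -> `|fb (Tdn w)| <= F0 ->
  `|lifted_residual u - lifted_residual w| <= residual_lip Mw D MJ F0 * `|u - w|.
Proof.
move=> wM uwD JM fM; set e := `|u - w|; set su := Tdn u; set sw := Tdn w.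
have Lt0 : 0 <= Lt by rewrite mulr_ge0 ?sqrtr_ge0.
have Lf0 : 0 <= Lf' by rewrite mulr_ge0 ?sqrtr_ge0.
have LJ0 : 0 <= LJ' by rewrite !mulr_ge0 ?sqrtr_ge0.
have fbm u' w' := mxnorm_le_of_vnorm (fb_lip u' w').
have se : `|su - sw| <= Lt * e := nodewise_lipschitz u w Td_diff Td_diff_bound.
have seD : `|su - sw| <= Lt * D := le_trans se (ler_wpM2l Lt0 uwD).
have He : `|H *m (kron_vec u - kron_vec w)| <= (N * N)%:R * `|H| * ((2 * Mw + D) * e).
  apply: le_trans (mxnorm_mulmx _ _) _; rewrite ler_wpM2l ?mulr_ge0 //.
  apply: le_trans (kron_vec_lipschitz _ _) _; rewrite ler_wpM2r //.
  by have := ler_normD (u - w) w; rewrite subrK; lra.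
have fsu : `|fb su| <= F0 + Lf' * (Lt * D).
  have := ler_normD (fb su - fb sw) (fb sw); rewrite subrK => /le_trans; apply.
  by rewrite addrC lerD // (le_trans (fbm su sw)) // ler_wpM2l.
have JFe : `|J su *m fb su - J sw *m fb sw|
    <= (LJ' * (F0 + Lf' * (Lt * D)) + (ds * n)%:R * MJ * Lf') * (Lt * e).
  apply: le_trans (mxnorm_mulmx_sub _ _ _ _) _; rewrite mulrDl; apply: lerD.
    apply: le_trans (mxnorm_le_of_vnorm2 (J_lip su sw _)) _; rewrite [leRHS]mulrAC.
    by apply: ler_pM; rewrite ?mulr_ge0 ?ler_wpM2l.
  rewrite -[leRHS]mulrA; apply: ler_pM; rewrite ?mulr_ge0 ?ler_wpM2l //.
  exact: le_trans (fbm su sw) (ler_wpM2l Lf0 se).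
have -> : lifted_residual u - lifted_residual w = A *m (u - w)
    + H *m (kron_vec u - kron_vec w) - (J su *m fb su - J sw *m fb sw).
  rewrite /lifted_residual !mulmxBr -/su -/sw.
  move: (A *m u) (A *m w) (H *m kron_vec u) (H *m kron_vec w) => a1 a2 h1 h2.
  move: (J su *m fb su) (J sw *m fb sw) => j1 j2.
  by apply/matrixP => i k; rewrite !mxE; ring.
apply: le_trans (ler_normB _ _) _; apply: le_trans (lerD (ler_normD _ _) (lexx _)) _.
have -> : residual_lip Mw D MJ F0 * e = N%:R * `|A| * e
    + (N * N)%:R * `|H| * ((2 * Mw + D) * e)
    + (LJ' * (F0 + Lf' * (Lt * D)) + (ds * n)%:R * MJ * Lf') * (Lt * e).
  by rewrite /residual_lip; ring.
by rewrite !lerD ?mxnorm_mulmx.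
Qed.

Lemma lifted_residual_perturbed_sqr_le Mw D MJ F0 e u w :
  (forall i, `|lifted_residual w i 0| <= e) ->
  `|w| <= Mw -> `|J (Tdn w)| <= MJ -> `|fb (Tdn w)| <= F0 -> vnorm (w - u) <= D ->
  vnorm (lifted_residual u) ^+ 2 <= 2 * (Num.sqrt N%:R * e) ^+ 2
    + 2 * (Num.sqrt N%:R * residual_lip Mw D MJ F0 * vnorm (w - u)) ^+ 2.
Proof.
move=> we wM JM fM wuD; rewrite -mulrA; apply: vnorm_sqr_le_split we _.
have uw : `|u - w| <= vnorm (w - u) by rewrite distrC mxnorm_le_vnorm.
apply: le_trans (lifted_residual_lipschitz wM (le_trans uw wuD) JM fM) _.
rewrite ler_wpM2l // residual_lip_ge0 //; last exact: le_trans (normr_ge0 _) fM.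
- exact: le_trans (normr_ge0 _) wM.
- exact: le_trans (vnorm_ge0 _) wuD.
- exact: le_trans (normr_ge0 _) JM.
Qed.

Lemma opinf_lifted_residual_le K (W : 'M[R]_(N, K)) e :
  (0 < K)%N -> 0 <= e -> (forall k i, `|lifted_residual (col k W) i 0| <= e) ->
  exists C1 : R, 0 <= C1 /\
  forall U sg V, is_svd W U sg V -> forall r (hr : (r <= N)%N),
  let Ur := lead_cols hr U in
  let Pr := Ur *m Ur^T in
  let What := Ur^T *m W in
  let What' := \matrix_(i, k)
      (Ur^T *m (J (Tdn (Pr *m col k W)) *m fb (Tdn (Pr *m col k W)))) i 0 in
  let eps := Num.sqrt (\sum_(i < N | (r <= i)%N) sg i ^+ 2) in
  exists (Ah : 'M[R]_r) (Hh : 'M[R]_(r, r * r)),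
    K%:R^-1 * frob2 (What^T *m Ah^T + (kron_col What)^T *m Hh^T - What'^T)
      <= (2 * (Num.sqrt N%:R * e) + C1 * eps) ^+ 2.
Proof.
move=> K0 e0 We.
(* Nothing below depends on the truncation [r], so neither does [C1]. *)
pose Mw := \big[Num.max/0]_k `|col k W|.
pose MJ := \big[Num.max/0]_k `|J (Tdn (col k W))|.
pose F0 := \big[Num.max/0]_k `|fb (Tdn (col k W))|.
pose beta := residual_lip Mw (Num.sqrt (frob2 W)) MJ F0.
have max_ge0 (F : 'I_K -> R) : 0 <= \big[Num.max/0]_k F k by apply/bigmax_geP; left.
have beta0 : 0 <= beta by apply: residual_lip_ge0; rewrite ?sqrtr_ge0 ?max_ge0.
exists (2 * (Num.sqrt N%:R * beta)); split => [|U sg V svd r hr Ur Pr What What' eps].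
  by rewrite !mulr_ge0 ?sqrtr_ge0.
exists (Ur^T *m A *m Ur), (Ur^T *m H *m kron_mx Ur).
have -> : What^T *m (Ur^T *m A *m Ur)^T
      + (kron_col What)^T *m (Ur^T *m H *m kron_mx Ur)^T - What'^T
    = (Ur^T *m A *m Ur *m What + Ur^T *m H *m kron_mx Ur *m kron_col What - What')^T.
  by rewrite linearB linearD /= !trmx_mul.
rewrite frob2_trmx frob2_cols.
apply: (mean_sqr_le (d := fun k => vnorm (col k W - Pr *m col k W))) => //.
- by rewrite mulr_ge0 ?sqrtr_ge0.
- by rewrite mulr_ge0 ?sqrtr_ge0.
- exact: sqrtr_ge0.
- move=> k; rewrite lifted_residual_col.
  apply: le_trans (_ : _ <= vnorm (lifted_residual (Pr *m col k W)) ^+ 2) _.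
    by rewrite lerXn2r ?nnegrE ?vnorm_ge0 ?vnorm_lead_cols //; case: svd.
  apply: lifted_residual_perturbed_sqr_le (We k) _ _ _ (vnorm_sub_lead_proj_le hr k svd).
  + exact: le_bigmax.
  + exact: le_bigmax.
  + exact: le_bigmax.
- rewrite (sum_vnorm_sub_lead_proj hr svd) sqr_sqrtr //.
  by rewrite sumr_ge0 // => i _; rewrite sqr_ge0.
Qed.

End LiftedResidual.

Theorem theorem1 (R : realType) (d ds dw : nat) (p c cs cw : R) :
  exists C0 : R, 0 <= C0 /\
  forall (Omega : set 'rV[R]_d) (Tf : R) (S : 'I_ds -> set R)
    (f : 'I_ds -> ('rV[R]_d -> 'cV[R]_ds) -> 'rV[R]_d -> R)
    (s : 'rV[R]_d -> R -> 'cV[R]_ds)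
    (Tl : 'cV[R]_ds -> 'cV[R]_dw) (Jl : 'cV[R]_ds -> 'M[R]_(dw, ds))
    (a h : 'I_dw -> ('rV[R]_d -> 'cV[R]_dw) -> 'rV[R]_d -> R)
    (Td : 'cV[R]_dw -> 'cV[R]_ds) (cd : R),
  0 < Tf ->
  (* s is a solution of ds/dt = f(s) on Omega x [0, Tf), with values in S *)
  (forall y t, Omega y -> 0 <= t < Tf -> inS S (s y t)) ->
  (forall y t (j : 'I_ds), Omega y -> 0 <= t < Tf ->
     is_derive t 1 (fun tau => s y tau j 0) (f j (fun z => s z t) y)) ->
  (* quadratic lifting Tl with Jacobian Jl, sup_S ||Jl|| <= c *)
  (forall v, inS S v -> differentiable Tl v /\ forall u, 'd Tl v u = Jl v *m u) ->
  (forall v, inS S v -> forall u, vnorm (Jl v *m u) <= c * vnorm u) ->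
  (forall j, lin_op (a j)) -> (forall j, quad_op (h j)) ->
  (forall y t (j : 'I_dw), Omega y -> 0 <= t < Tf ->
     is_derive t 1 (fun tau => Tl (s y tau) j 0)
       (a j (fun z => Tl (s z t)) y + h j (fun z => Tl (s z t)) y)) ->
  (* reverse lifting Td: left inverse of Tl on S, differentiable, bounded derivative *)
  (forall v, inS S v -> Td (Tl v) = v) ->
  (forall u, differentiable Td u /\ forall v, vnorm ('d Td u v) <= cd * vnorm v) ->
  forall (n : nat) (xg : 'I_n -> 'rV[R]_d)
    (fb : 'cV[R]_(ds * n) -> 'cV[R]_(ds * n))
    (A : 'M[R]_(dw * n)) (H : 'M[R]_(dw * n, (dw * n) * (dw * n))),
  (0 < n)%N -> (forall l, Omega (xg l)) ->
  let sbar := fun t => assemble (fun l => s (xg l) t) in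
  let wbar := fun t => nodewise Tl (sbar t) in
  (* bold f Lipschitz, consistent of order p *)
  (exists Lf : R, forall u v, vnorm (fb u - fb v) <= Lf * vnorm (u - v)) ->
  (forall t j l, 0 <= t < Tf ->
     `|fb (sbar t) (mxvec_index j l) 0 - f j (fun z => s z t) (xg l)|
       <= cs * (n%:R) `^ (- p)) ->
  (* A, H consistent of order p *)
  (forall t j l, 0 <= t < Tf ->
     `|(A *m wbar t + H *m kron_vec (wbar t)) (mxvec_index j l) 0
        - (a j (fun z => Tl (s z t)) (xg l) + h j (fun z => Tl (s z t)) (xg l))|
       <= cw * (n%:R) `^ (- p)) ->
  (* bold J Lipschitz *)
  (exists LJ : R, forall u v z,
     vnorm ((nodewise_jac (n:=n) Jl u - nodewise_jac (n:=n) Jl v) *m z)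
       <= LJ * vnorm (u - v) * vnorm z) ->
  forall (K : nat) (tk : 'I_K -> R), (0 < K)%N -> (forall k, 0 <= tk k < Tf) ->
  let W := \matrix_(q, k) wbar (tk k) q 0 in
  exists C1 C2 : R, 0 <= C1 /\ 0 <= C2 /\
  forall (U : 'M[R]_(dw * n)) (sg : nat -> R) (V : 'M[R]_K), is_svd W U sg V ->
  forall (r : nat) (hr : (r <= dw * n)%N),
  let Ur := lead_cols hr U in
  let Pr := Ur *m Ur^T in
  let What := Ur^T *m W in
  let What' := \matrix_(i, k)
      (Ur^T *m (nodewise_jac (n:=n) Jl (nodewise Td (Pr *m col k W))
                *m fb (nodewise Td (Pr *m col k W)))) i 0 in
  let eps := Num.sqrt (\sum_(i < dw * n | (r <= i)%N) sg i ^+ 2) in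
  exists (Ah : 'M[R]_r) (Hh : 'M[R]_(r, r * r)),
    K%:R^-1 * frob2 (What^T *m Ah^T + (kron_col What)^T *m Hh^T - What'^T)
      <= (C0 * (n%:R) `^ (2^-1 - p) + (C1 + C2) * eps) ^+ 2.
Proof.
pose B := `|cw| + `|c| * Num.sqrt ds%:R * `|cs|.
exists (2 * Num.sqrt dw%:R * B); split; first by rewrite !mulr_ge0 ?sqrtr_ge0 ?addr_ge0.
move=> Omega Tf S f s Tl Jl a h Td cd _ HS Hs HTl Hc _ _ Hw HTd HTd' n xg fb A H n0 Hxg
  sbar wbar [Lf HLf] Hcs Hcw [LJ HLJ] K tk K0 Htk W.
have e0 : 0 <= B * n%:R `^ (- p) by rewrite !mulr_ge0 ?addr_ge0 ?sqrtr_ge0 ?powR_ge0.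
have snapshot_le k q : `|lifted_residual Jl Td fb A H (col k W) q 0| <= B * n%:R `^ (- p).
  have -> : col k W = wbar (tk k) by apply/matrixP => q' j; rewrite (ord1 j) !mxE.
  have sS l : inS S (s (xg l) (tk k)) by apply: HS.
  rewrite mulrDl -[X in _ + X]mulrA.
  apply: (lifted_residual_consistent
    (fe := fun l => \col_i f i (fun z => s z (tk k)) (xg l))) => [|l u|j l|i l].
  - by apply: nodewiseK => l; rewrite node_assemble HTd.
  - by rewrite node_assemble; apply: Hc.
  - have [dTl dTlE] := HTl _ (sS l).
    have Dsl i := Hs _ _ i (Hxg l) (Htk k).
    rewrite node_assemble -(derive1_comp_entry _ Dsl dTl dTlE).
    rewrite (@derive_val _ _ _ _ _ _ _ (Hw _ _ j (Hxg l) (Htk k))).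
    by apply: le_trans (Hcw _ _ _ (Htk k)) _; rewrite ler_wpM2r ?ler_norm.
  - by rewrite mxE; apply: le_trans (Hcs _ _ _ (Htk k)) _; rewrite ler_wpM2r ?ler_norm.
have [C1 [C10 opinf]] := opinf_lifted_residual_le (fun u => (HTd' u).1)
  (fun u => (HTd' u).2) HLf HLJ K0 e0 snapshot_le.
exists C1, 0; do 2!split => //; move=> U sg V svd r hr.
have -> : 2 * Num.sqrt dw%:R * B * n%:R `^ (2^-1 - p) =
    2 * (Num.sqrt (dw * n)%:R * (B * n%:R `^ (- p))).
  by rewrite (mulrCA (Num.sqrt _)) sqrt_mul_powR //; ring.
by rewrite addr0; exact: opinf svd r hr.
Qed.
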